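(* Let $\mathfrak{A}=(Q,\Sigma_I\times\Sigma_O,q_\iota,\delta,\Omega)$ be a deterministic parity automaton and let $k>0$. If Player~$O$ wins the delay game $\Gamma_k(L(\mathfrak{A}))$, then she wins the game $\mathcal{G}_k$.
   Context: DPA: $\mathfrak{A}$ has finite state set $Q$, initial state $q_\iota$, transition function $\delta\colon Q\times(\Sigma_I\times\Sigma_O)\to Q$, coloring $\Omega\colon Q\to\mathbb{N}$; a run $q_0q_1\cdots$ ($q_0=q_\iota$, $q_{i+1}=\delta(q_i,\text{$i$-th letter})$) is accepting iff $\limsup_i\Omega(q_i)$ is even; $L(\mathfrak{A})$ is the set of words with accepting run. Delay game $\Gamma_k(L)$: in round $0$ Player~$I$ picks $a_0\cdots a_k\in\Sigma_I$, then Player~$O$ picks $b_0\in\Sigma_O$; in round $i>0$ Player~$I$ picks $a_{k+i}$, then Player~$O$ picks $b_i$. A strategy for $O$ is $\sigma\colon\Sigma_I^*\to\Sigma_O$, an outcome is consistent with it if $b_i=\sigma(a_0\cdots a_{i+k})$ for all $i$, it is winning if all consistent outcomes $\binom{a_0}{b_0}\binom{a_1}{b_1}\cdots$ lie in $L$, and $O$ wins if she has a winning strategy. The game $\mathcal{G}_k$: let $C=\Omega(Q)$. Define $\delta_\mathcal{T}((q,c),\binom{a}{b})=(q',\max\{c,\Omega(q')\})$ with $q'=\delta(q,\binom{a}{b})$, and $\delta_\mathcal{P}\colon 2^{Q\times C}\times\Sigma_I\to 2^{Q\times C}$ by $\delta_\mathcal{P}(S,a)=\bigcup_{(q,c)\in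 S}\bigcup_{b\in\Sigma_O}\{\delta_\mathcal{T}((q,c),\binom{a}{b})\}$, extended to words by $\delta^*_\mathcal{P}(S,\epsilon)=S$, $\delta^*_\mathcal{P}(S,wa)=\delta_\mathcal{P}(\delta^*_\mathcal{P}(S,w),a)$. For nonempty $D\subseteq Q\times C$ and $w\in\Sigma_I^*$ let $r^D_w\colon D\to 2^{Q\times C}$, $r^D_w(q,c)=\delta^*_\mathcal{P}(\{(q,\Omega(q))\},w)$. Let $\mathfrak{R}=\{r^D_w : w\in\Sigma_I^k,\ \emptyset\ne D\subseteq Q\times C\}$ (partial functions $Q\times C\rightharpoonup 2^{Q\times C}$ with domain $\mathrm{dom}(r)$). In $\mathcal{G}_k$, in each round $i\in\mathbb{N}$ Player~$I$ picks $r_i\in\mathfrak{R}$ and then Player~$O$ picks $(q_i,c_i)\in Q\times C$, subject to: $\mathrm{dom}(r_0)=\{(q_\iota,\Omega(q_\iota))\}$, $\mathrm{dom}(r_i)=r_{i-1}(q_{i-1},c_{i-1})$ for $i>0$, and $(q_i,c_i)\in\mathrm{dom}(r_i)$ for all $i$. A play is won by Player~$O$ iff $\limsup_i c_i$ is even. A strategy for $O$ maps each prefix $r_0(q_0,c_0)\cdots r_i$ to a legal $(q_i,c_i)$; she wins $\mathcal{G}_k$ if she has a strategy all of whose consistent plays she wins. *)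

From mathcomp Require Import all_boot.
Set Implicit Arguments. Unset Strict Implicit. Unset Printing Implicit Defensive.

Definition limsup_even (s : nat -> nat) : Prop :=
  exists c, ~~ odd c /\ (forall N, exists2 n, N <= n & s n = c)
                      /\ (exists N, forall n, N <= n -> s n <= c).

Section DPA.
Variables (Q SI SO : finType).
Variable delta : Q -> SI * SO -> Q.
Variable qi : Q.
Variable Omega : Q -> nat.

Fixpoint run (w : nat -> SI * SO) (n : nat) : Q :=
  if n is m.+1 then delta (run w m) (w m) else qi.

Definition accepts (w : nat -> SI * SO) : Prop :=
  limsup_even (fun n => Omega (run w n)).

Definition delay_win (k : nat) : Prop :=
  exists sigma : seq SI -> SO,
    forall a : nat -> SI, accepts (fun i => (a i, sigma (mkseq a (i + k).+1))).

Definition C := seq_sub (codom Omega).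
Definition OmC (q : Q) : C := SeqSub (codom_f Omega q).
Definition maxC (c1 c2 : C) : C := if ssval c1 <= ssval c2 then c2 else c1.

Definition deltaT (x : Q * C) (ab : SI * SO) : Q * C :=
  let q' := delta x.1 ab in (q', maxC x.2 (OmC q')).

Definition deltaP (S : {set Q * C}) (a : SI) : {set Q * C} :=
  \bigcup_(x in S) [set deltaT x (a, b) | b : SO].

Definition deltaPs (S : {set Q * C}) (w : seq SI) : {set Q * C} :=
  foldl deltaP S w.

(* partial functions Q x C -> 2^(Q x C): None outside the domain *)
Definition pfun := {ffun Q * C -> option {set Q * C}}.

Definition pdom (r : pfun) : {set Q * C} := [set x | r x != None].

Definition rfun (D : {set Q * C}) (w : seq SI) : pfun :=
  [ffun x => if x \in D then Some (deltaPs [set (x.1, OmC x.1)] w) else None].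

Definition inR (k : nat) (r : pfun) : Prop :=
  exists (D : {set Q * C}) (w : seq SI), [/\ D != set0, size w = k & r = rfun D w].

Fixpoint hist (tau : seq (pfun * (Q * C)) -> pfun -> Q * C) (r : nat -> pfun) (n : nat)
  : seq (pfun * (Q * C)) :=
  if n is m.+1 then rcons (hist tau r m) (r m, tau (hist tau r m) (r m)) else [::].

Definition omove tau r n : Q * C := tau (hist tau r n) (r n).

Definition I_legal_upto (k : nat) tau (r : nat -> pfun) (n : nat) : Prop :=
  [/\ forall j, j <= n -> inR k (r j),
      pdom (r 0) = [set (qi, OmC qi)]
    & forall j, j < n -> r j (omove tau r j) = Some (pdom (r j.+1))].

Definition Gk_win (k : nat) : Prop :=
  exists tau : seq (pfun * (Q * C)) -> pfun -> Q * C,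
    (forall r n, I_legal_upto k tau r n -> omove tau r n \in pdom (r n))
    /\ (forall r, (forall n, I_legal_upto k tau r n) ->
          limsup_even (fun i => ssval (omove tau r i).2)).

End DPA.

From mathcomp Require Import all_boot zify.
Set Implicit Arguments. Unset Strict Implicit. Unset Printing Implicit Defensive.

(* Player O plays G_k by simulating her strategy sigma for Gamma_k.  Each move
   r_n of Player I is r^D_w for a word w_n of length k; concatenating these words
   yields an input word a for Gamma_k.  After Player I's move r_(n+1), Player O
   knows w_0 .. w_(n+1), i.e. the first (n+2)k letters of a, which is exactly the
   lookahead sigma needs to fix its outputs on block n = [nk, (n+1)k).  She answers
   with the state reached by the run on the resulting outcome after block n,
   paired with the largest colour seen on that block; by construction this pair
   lies in r_n(q_n, c_n).  Her colours are thus block maxima of the colours of an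
   accepting run, and have the same even limsup. *)

Lemma limsup_even_shift (s t : nat -> nat) :
  (forall n, t n.+1 = s n) -> limsup_even s -> limsup_even t.
Proof.
move=> ts [c [even_c [s_inf [N s_le]]]]; exists c; split=> //; split.
  by move=> M; have [n le_Mn sn_c] := s_inf M; exists n.+1; rewrite ?ts // ltnW.
by exists N.+1 => -[|n] // le_Nn; rewrite ts s_le.
Qed.

Lemma limsup_even_blocks (s : nat -> nat) k : 0 < k -> limsup_even s ->
  limsup_even (fun m => \max_(m * k <= j < m * k + k.+1) s j).
Proof.
move=> k_gt0 [c [even_c [s_inf [N s_le]]]].
have block_le m : N <= m -> \max_(m * k <= j < m * k + k.+1) s j <= c.
  move=> le_Nm; apply/bigmax_leqP_seq => j; rewrite mem_index_iota => /andP[le_j _] _.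
  by apply: s_le; nia.
exists c; split=> //; split; last by exists N.
move=> M; have [n le_n sn_c] := s_inf ((M + N) * k).
have le_MN : M + N <= n %/ k by rewrite leq_divRL.
exists (n %/ k); first lia.
apply/eqP; rewrite eqn_leq block_le 1?andTb; last lia.
rewrite -sn_c; apply: leq_bigmax_seq => //; rewrite mem_index_iota.
have := divn_eq n k; have := ltn_pmod n k_gt0; lia.
Qed.

Section Automaton.
Variables (Q SI SO : finType) (delta : Q -> SI * SO -> Q) (qi : Q) (Omega : Q -> nat).

Local Notation C := (C Omega).
Local Notation OmC := (OmC Omega).
Local Notation run := (run delta qi).

Lemma eq_run (w w' : nat -> SI * SO) n :
  (forall i, i < n -> w i = w' i) -> run w n = run w' n.
Proof. by elim: n => [|n IHn] //= eq_w; rewrite IHn ?eq_w // => i /ltnW; apply: eq_w. Qed.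

Lemma maxC_val (c1 c2 : C) : ssval (maxC c1 c2) = maxn (ssval c1) (ssval c2).
Proof. by rewrite /maxC; case: leqP => ?; lia. Qed.

Definition track (q : Q) (s : seq (SI * SO)) : Q * C :=
  foldl (deltaT delta (Omega:=Omega)) (q, OmC q) s.

Lemma foldl_deltaT_in_deltaPs (S : {set Q * C}) x (s : seq (SI * SO)) : x \in S ->
  foldl (deltaT delta (Omega:=Omega)) x s \in deltaPs delta S (map fst s).
Proof.
elim: s x S => [|[a b] s IHs] x S Sx //=.
by apply: IHs; apply/bigcupP; exists x => //; apply/imsetP; exists b.
Qed.

Lemma track_in_deltaPs q s : track q s \in deltaPs delta [set (q, OmC q)] (map fst s).
Proof. by apply: foldl_deltaT_in_deltaPs; rewrite inE. Qed.

Section TrackRun.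
Variable w : nat -> SI * SO.

Lemma track_run_rcons p t : track (run w p) [seq w j | j <- iota p t.+1] =
  deltaT delta (track (run w p) [seq w j | j <- iota p t]) (w (p + t)).
Proof. by rewrite -addn1 iotaD map_cat /track foldl_cat. Qed.

Lemma track_run_state p t : (track (run w p) [seq w j | j <- iota p t]).1 = run w (p + t).
Proof.
elim: t => [|t IHt]; first by rewrite addn0.
by rewrite track_run_rcons /= IHt addnS.
Qed.

Lemma track_run_colour p t : ssval (track (run w p) [seq w j | j <- iota p t]).2 =
  \max_(p <= j < p + t.+1) Omega (run w j).
Proof.
elim: t => [|t IHt]; first by rewrite addn1 big_nat1.
rewrite track_run_rcons /= maxC_val IHt track_run_state [p + t.+2]addnS.
by rewrite big_nat_recr ?leq_addr // addnS.
Qed.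

End TrackRun.

Lemma pdom_rfun (D : {set Q * C}) (w : seq SI) : pdom (rfun delta D w) = D.
Proof. by apply/setP => x; rewrite inE ffunE; case: (x \in D). Qed.

Lemma inR_card_gt0 k (r : pfun Omega) : 0 < k -> inR delta k r -> 0 < #|SI|.
Proof.
move=> k_gt0 [D [[|a w] [_ size_w _]]]; first by rewrite -size_w in k_gt0.
by apply/card_gt0P; exists a.
Qed.

Lemma hist_fst tau (r : nat -> pfun Omega) n : map fst (hist tau r n) = mkseq r n.
Proof. by elim: n => [|n IHn] //=; rewrite map_rcons IHn mkseqS. Qed.

End Automaton.

Section Strategy.
Variables (Q SI SO : finType) (delta : Q -> SI * SO -> Q) (qi : Q) (Omega : Q -> nat).
Variables (k : nat) (sigma : seq SI -> SO) (a0 : SI).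
Hypothesis k_gt0 : 0 < k.

Local Notation pfun := (pfun Omega).
Local Notation run := (run delta qi).

Definition witness_word (r : pfun) : seq SI :=
  if [pick w : k.-tuple SI | r == rfun delta (pdom r) w] is Some w then val w else [::].

Lemma witness_wordP r : inR delta k r ->
  size (witness_word r) = k /\ r = rfun delta (pdom r) (witness_word r).
Proof.
case=> D [w [_ size_w ->]]; rewrite /witness_word.
case: pickP => [v /eqP r_v | no_witness]; first by rewrite size_tuple.
by have := no_witness (Tuple (introT eqP size_w)); rewrite pdom_rfun /= eqxx.
Qed.

(* [a0] is only read when some r_j is not in frak R. *)
Definition input (r : nat -> pfun) (i : nat) : SI :=
  nth a0 (witness_word (r (i %/ k))) (i %% k).

Definition outcome (a : nat -> SI) (i : nat) : SI * SO := (a i, sigma (mkseq a (i + k).+1)).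

Definition Gk_move (r : nat -> pfun) (n : nat) : Q * C Omega :=
  if n is m.+1 then
    track delta Omega (run (outcome (input r)) (m * k))
      [seq outcome (input r) j | j <- iota (m * k) k]
  else (qi, OmC Omega qi).

(* The history only determines r_0 .. r_n, which suffices by [Gk_move_prefix]. *)
Definition Gk_strategy (h : seq (pfun * (Q * C Omega))) (r : pfun) : Q * C Omega :=
  Gk_move (nth r (rcons (map fst h) r)) (size h).

Lemma input_prefix r r' n : (forall j, j <= n -> r j = r' j) ->
  forall i, i < n.+1 * k -> input r i = input r' i.
Proof. by move=> eq_r i lt_i; rewrite /input eq_r // -ltnS ltn_divLR. Qed.

Lemma outcome_prefix a a' n : (forall i, i < n + k -> a i = a' i) ->
  forall i, i < n -> outcome a i = outcome a' i.
Proof.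
move=> eq_a i lt_in; rewrite /outcome eq_a ?ltn_addr //; congr (_, sigma _).
by apply/eq_in_map => j; rewrite mem_iota => /andP[_ lt_j]; apply: eq_a; lia.
Qed.

Lemma Gk_move_prefix r r' n : (forall j, j <= n -> r j = r' j) ->
  Gk_move r n = Gk_move r' n.
Proof.
case: n => [|m] // eq_r.
have eq_input i : i < m.+1 * k + k -> input r i = input r' i.
  by rewrite -mulSnr; apply: input_prefix.
have eq_outcome := outcome_prefix eq_input.
rewrite /Gk_move (@eq_run _ _ _ _ _ _ (outcome (input r')) (m * k)) => [|i lt_i].
  by congr track; apply/eq_in_map => j; rewrite mem_iota => /andP[_ lt_j]; apply: eq_outcome; lia.
by apply: eq_outcome; lia.
Qed.

Lemma omove_Gk_strategy r n : omove Gk_strategy r n = Gk_move r n.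
Proof.
rewrite /omove /Gk_strategy -(size_map fst) hist_fst -mkseqS size_mkseq.
by apply: Gk_move_prefix => j le_jn; rewrite nth_mkseq.
Qed.

Lemma Gk_move_state r m : (Gk_move r m).1 = run (outcome (input r)) (m * k).
Proof. by case: m => [|m] //; rewrite track_run_state mulSn addnC. Qed.

Lemma Gk_move_colour r m : ssval (Gk_move r m.+1).2 =
  \max_(m * k <= j < m * k + k.+1) Omega (run (outcome (input r)) j).
Proof. exact: track_run_colour. Qed.

Lemma inputs_of_block r m : size (witness_word (r m)) = k ->
  map fst [seq outcome (input r) j | j <- iota (m * k) k] = witness_word (r m).
Proof.
move=> size_w; rewrite -map_comp -[m * k]addn0 iotaDl -map_comp -[RHS](mkseq_nth a0) size_w.
apply/eq_in_map => i; rewrite mem_iota => /andP[_ lt_ik] /=.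
by rewrite /input divnMDl // divn_small // modnMDl modn_small // addn0.
Qed.

Lemma Gk_strategy_legal r n :
  I_legal_upto delta qi k Gk_strategy r n -> omove Gk_strategy r n \in pdom (r n).
Proof.
rewrite omove_Gk_strategy; case: n => [[_ -> _] | m [R_r _ step_r]]; first by rewrite inE.
have [size_w r_m] := witness_wordP (R_r m (leqnSn m)).
move: (step_r m (ltnSn m)); rewrite omove_Gk_strategy {1}r_m ffunE; case: ifP => // _ [<-].
rewrite Gk_move_state -(inputs_of_block size_w).
exact: track_in_deltaPs.
Qed.

Hypothesis sigma_wins : forall a, accepts delta qi Omega (outcome a).

Lemma Gk_strategy_winning r : limsup_even (fun n => ssval (omove Gk_strategy r n).2).
Proof.
apply: limsup_even_shift (limsup_even_blocks k_gt0 (sigma_wins (input r))) => m.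
by rewrite omove_Gk_strategy Gk_move_colour.
Qed.

End Strategy.

Theorem mainTheorem2 (Q SI SO : finType) (delta : Q -> SI * SO -> Q) (qi : Q)
  (Omega : Q -> nat) (k : nat) :
  0 < k -> delay_win delta qi Omega k -> Gk_win delta qi Omega k.
Proof.
move=> k_gt0 [sigma sigma_wins]; case: (pickP (@predT SI)) => [a0 _ | no_letter].
  exists (Gk_strategy delta qi k sigma a0); split=> [r n | r _].
    exact: Gk_strategy_legal.
  exact: Gk_strategy_winning.
have no_move (r : pfun Omega) : ~ inR delta k r.
  by move/(inR_card_gt0 k_gt0); rewrite (eq_card0 no_letter).
exists (fun _ _ => (qi, OmC Omega qi)).
by split=> [r n [R_r _ _] | r /(_ 0) [R_r _ _]]; case: (no_move (r 0)); apply: R_r.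
Qed.
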